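(* Let $(X,d)$ be a compact metric space, $k\geq1$, $T:\mathbb{Z}^k\times X\to X$ a continuous action, and $c>0$ such that any two distinct $x,y\in X$ satisfy $\sup_{u\in\mathbb{Z}^k}d(T^ux,T^uy)>c$. Fix an integer $l>0$ such that whenever $d(x,y)\geq c/2$ there is $u\in\mathbb{Z}^k$ with $|u|\leq l$ and $d(T^ux,T^uy)\geq c$, and fix $\alpha>1$ with $\alpha^l<2$. For $x\neq y$ let $\mathbf{n}(x,y)=\min\{n\geq0:\exists u\in\mathbb{Z}^k,\ |u|\leq n,\ d(T^ux,T^uy)\geq c\}$, let $\mathbf{n}(x,x)=\infty$, and set $\rho(x,y)=\alpha^{-\mathbf{n}(x,y)}$ (so $\rho(x,x)=0$). Then: (1) $\rho(x,y)=\rho(y,x)$; (2) $\rho(x,y)=0$ iff $x=y$; (3) $\rho(x,z)\leq2\max(\rho(x,y),\rho(y,z))$ for all $x,y,z$; (4) if $x_n\to x$ and $y_n\to y$ then $\limsup_{n\to\infty}\rho(x_n,y_n)\leq\rho(x,y)$; (5) the balls $B_r(x,\rho)=\{y:\rho(x,y)<r\}$ ($x\in X$, $r>0$) form an open base of the topology of $X$.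
   Context: $|u|$ denotes the norm of $u\in\mathbb{Z}^k$ (a fixed norm, e.g. Euclidean). Such an integer $l$ exists by expansiveness and compactness. *)

From HB Require Import structures.
From mathcomp Require Import all_boot all_order all_algebra.
From mathcomp Require Import boolp classical_sets reals topology sequences.
Set Implicit Arguments. Unset Strict Implicit. Unset Printing Implicit Defensive.
Import Order.TTheory GRing.Theory Num.Theory.
Local Open Scope ring_scope.

Section Defs.
Variables (R : realType) (X : Type).

Definition is_metric (d : X -> X -> R) : Prop :=
  [/\ forall x y, 0 <= d x y,
      forall x y, d x y = 0 <-> x = y,
      forall x y, d x y = d y x &
      forall x y z, d x z <= d x y + d y z].

Definition d_open (d : X -> X -> R) (U : X -> Prop) : Prop :=
  forall x, U x -> exists2 e : R, 0 < e & forall y, d x y < e -> U y.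

Definition d_compact (d : X -> X -> R) : Prop :=
  forall (I : Type) (F : I -> X -> Prop),
    (forall i, d_open d (F i)) -> (forall x, exists i, F i x) ->
    exists (n : nat) (f : 'I_n -> I), forall x, exists i, F (f i) x.

Definition d_continuous (d : X -> X -> R) (f : X -> X) : Prop :=
  forall x (e : R), 0 < e -> exists2 del : R, 0 < del &
    forall y, d x y < del -> d (f x) (f y) < e.

Definition d_cvg (d : X -> X -> R) (s : nat -> X) (x : X) : Prop :=
  forall e : R, 0 < e -> exists N, forall n, (N <= n)%N -> d (s n) x < e.

(* Euclidean norm on Z^k: |u| <= n  <->  sum_i u_i^2 <= n^2 (n >= 0) *)
Definition normle (k : nat) (u : 'rV[int]_k) (n : nat) : bool :=
  (\sum_(i < k) (u ord0 i) ^+ 2 <= (n ^ 2)%:Z)%R.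

Definition is_action (k : nat) (T : 'rV[int]_k -> X -> X) : Prop :=
  (forall x, T 0 x = x) /\ (forall u v x, T (u + v) x = T u (T v x)).

Definition nset (d : X -> X -> R) (k : nat) (T : 'rV[int]_k -> X -> X)
  (c : R) (x y : X) (n : nat) : Prop :=
  exists2 u, normle u n & c <= d (T u x) (T u y).

(* bold n(x,y): Some (minimal such n), or None (= infinity) when x = y
   (or when no such n exists) *)
Definition nxy (d : X -> X -> R) (k : nat) (T : 'rV[int]_k -> X -> X)
  (c : R) (x y : X) : option nat :=
  if pselect (x = y) then None else
  match pselect (exists n, `[< nset d T c x y n >]) with
  | left h => Some (ex_minn h)
  | right _ => None
  end.

(* rho(x,y) = alpha^(-n(x,y)), with alpha^(-infinity) = 0 *)
Definition rho (d : X -> X -> R) (k : nat) (T : 'rV[int]_k -> X -> X)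
  (c alpha : R) (x y : X) : R :=
  match nxy d T c x y with Some n => alpha ^- n | None => 0 end.

End Defs.

From HB Require Import structures.
From mathcomp Require Import all_boot all_order all_algebra.
From mathcomp Require Import boolp classical_sets reals topology sequences normedtype.
From mathcomp Require Import ring lra zify.
Import Order.TTheory GRing.Theory Num.Theory.
Local Open Scope ring_scope.
Set Implicit Arguments. Unset Strict Implicit.

(* rho x y <= alpha^-(n+1) says that T^u x and T^u y stay c-close for every
   shift |u| <= n.  If T^u separates x and z, then T^u x is c/2-far from T^u y
   or T^u y from T^u z, and a further shift of norm at most l separates that
   pair; alpha^l < 2 absorbs this loss of l in the quasi-triangle inequality.
   Closeness along the finitely many shifts of norm <= n is an open condition,
   so rho is upper semicontinuous and its balls are open.  Conversely, by
   compactness finitely many shifts witness expansivity outside a d-ball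
   around y, so a small rho-ball around y lies inside that d-ball. *)

Section IntegerNorm.
Variable k : nat.
Implicit Types u v : 'rV[int]_k.

Lemma normle_mono u m n : (m <= n)%N -> normle u m -> normle u n.
Proof. by move=> mn /le_trans; apply; rewrite lez_nat leq_exp2r. Qed.

Lemma normle_exists u : exists n, normle u n.
Proof.
pose S := \sum_(i < k) u ord0 i ^+ 2.
have S_ge0 : 0 <= S by rewrite sumr_ge0 // => i _; rewrite sqr_ge0.
exists `|S|%N; rewrite /normle -/S -[leLHS]gez0_abs // lez_nat.
by case: `|S|%N => // n; rewrite leq_pmulr.
Qed.

Lemma normle_entry u n i : normle u n -> - n%:Z <= u ord0 i <= n%:Z.
Proof.
rewrite /normle (bigD1 i) //= => h.
have : u ord0 i ^+ 2 <= n%:Z * n%:Z.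
  rewrite -PoszM -(expn1 n) -expnS (le_trans _ h) // lerDl.
  by rewrite sumr_ge0 // => j _; rewrite sqr_ge0.
by rewrite expr2 => sq; apply/andP; split; nia.
Qed.

Lemma normle0 u : normle u 0 -> u = 0.
Proof.
move=> u0; apply/rowP => i; rewrite mxE.
by have := normle_entry i u0; rewrite [ord0]ord1; lia.
Qed.

Lemma normle_finite n : exists s : seq 'rV[int]_k, forall u, normle u n -> u \in s.
Proof.
pose shift (f : 'rV['I_n.*2.+1]_k) := \row_j ((f ord0 j : nat)%:Z - n%:Z).
exists (map shift (enum [set: 'rV['I_n.*2.+1]_k])) => u un; apply/mapP.
exists (\row_j inord (absz (u ord0 j + n%:Z))); first by rewrite mem_enum inE.
apply/rowP => j; have /andP[lo hi] := normle_entry j un.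
rewrite !mxE inordK; first by rewrite gez0_abs ?addrK //; lia.
by rewrite ltnS -lez_nat gez0_abs; lia.
Qed.

Lemma normle_dot u v m n : normle u m -> normle v n ->
  \sum_(i < k) u ord0 i * v ord0 i <= m%:Z * n%:Z.
Proof.
case: m => [/normle0 -> _|m]; first by rewrite big1 // => i _; rewrite mxE mul0r.
case: n => [_ /normle0 -> |n]; first by rewrite big1 // => i _; rewrite mxE mulr0.
rewrite /normle -!mulnn !PoszM => um vn.
have amgm : (m.+1 * n.+1)%:Z * (\sum_(i < k) u ord0 i * v ord0 i) *+ 2 <=
    n.+1%:Z ^+ 2 * (\sum_(i < k) u ord0 i ^+ 2) + m.+1%:Z ^+ 2 * (\sum_(i < k) v ord0 i ^+ 2).
  rewrite !mulr_sumr -sumrMnl -big_split /=.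
  apply: ler_sum => i _; rewrite mulr2n.
  by have := sqr_ge0 (n.+1%:Z * u ord0 i - m.+1%:Z * v ord0 i); nia.
nia.
Qed.

Lemma normle_add u v m n : normle u m -> normle v n -> normle (u + v) (m + n).
Proof.
move=> um vn; have uv := normle_dot um vn; rewrite /normle.
have -> : \sum_(i < k) (u + v) ord0 i ^+ 2 = \sum_(i < k) u ord0 i ^+ 2
    + (\sum_(i < k) u ord0 i * v ord0 i) *+ 2 + \sum_(i < k) v ord0 i ^+ 2.
  by rewrite -sumrMnl -!big_split /=; apply: eq_bigr => i _; rewrite mxE; ring.
move: um vn; rewrite /normle -!mulnn !PoszM PoszD; nia.
Qed.

End IntegerNorm.

Section InversePowers.
Variables (R : realType) (a : R).
Hypothesis a_gt1 : 1 < a.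

Let a_gt0 : 0 < a. Proof. by rewrite (lt_trans ltr01). Qed.

Lemma expN_gt0 n : 0 < a ^- n.
Proof. by rewrite invr_gt0 exprn_gt0. Qed.

Lemma ler_expN m n : (m <= n)%N -> a ^- n <= a ^- m.
Proof. by move=> mn; rewrite lef_pV2 ?posrE ?exprn_gt0 // ler_eXn2l. Qed.

Lemma ltr_expNS n : a ^- n.+1 < a ^- n.
Proof. by rewrite ltf_pV2 ?posrE ?exprn_gt0 // ltr_eXn2l. Qed.

Lemma expN_le1 n : a ^- n <= 1.
Proof. by rewrite -[leRHS]invr1 -(expr0 a) ler_expN. Qed.

Lemma expN_small e : 0 < e -> exists n, a ^- n < e.
Proof.
move=> e_gt0; have a1_lt1 : `|a^-1| < 1 by rewrite ger0_norm ?invf_lt1 // ltW ?invr_gt0.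
have [n _ small] := @cvgr0_norm_lt _ R^o _ _ _ _ (cvg_expr a1_lt1) _ e_gt0.
by exists n; rewrite -exprVn -[ltLHS]ger0_norm ?exprn_ge0 ?invr_ge0 ?ltW // small /=.
Qed.

Lemma expN_lt_double l m : a ^+ l < 2 -> a ^- m < 2 * a ^- (m + l).
Proof.
move=> al_lt2; rewrite exprD invfM mulrCA -[ltLHS]mulr1 ltr_pM2l ?expN_gt0 //.
by rewrite ltr_pdivlMr ?exprn_gt0 // mul1r.
Qed.

End InversePowers.

Lemma limn_sup_le_eventually (R : realType) (u : nat -> R) (M b : R) (N : nat) :
  (forall n, `|u n| <= M) -> (forall n, (N <= n)%N -> u n <= b) ->
  limn_sup u <= b.
Proof.
move=> uM ub; have u_bounded : bounded_fun (u : R^o^nat).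
  rewrite /bounded_near; near=> M' => n _ /=; apply: le_trans (uM n) _.
  by near: M'; apply: nbhs_pinfty_ge; exact: num_real.
rewrite limn_supE //; apply: (@le_trans _ _ (sups u N)).
  by apply: ge_inf; [exact: bounded_fun_has_lbound_sups | exists N].
apply: ge_sup; first by exists (u N); exists N => /=.
by move=> _ [n /= Nn <-]; apply: ub.
Unshelve. all: end_near.
Qed.

Section MetricNeighbourhoods.
Variables (R : realType) (X : Type) (d : X -> X -> R).
Hypothesis d_metric : is_metric d.
Implicit Types (x y z : X) (P Q : X -> X -> Prop).

Definition near_pair P x y : Prop :=
  exists2 del : R, 0 < del & forall x' y', d x x' < del -> d y y' < del -> P x' y'.

Lemma near_pairW P Q x y :
  (forall x' y', P x' y' -> Q x' y') -> near_pair P x y -> near_pair Q x y.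
Proof. by move=> PQ [del del_gt0 nearP]; exists del => // x' y' xx' yy'; apply/PQ/nearP. Qed.

Lemma near_pair_all (A : eqType) (s : seq A) (P : A -> X -> X -> Prop) x y :
  (forall a, a \in s -> near_pair (P a) x y) ->
  near_pair (fun x' y' => forall a, a \in s -> P a x' y') x y.
Proof.
elim: s => [_|a s IH nearP]; first by exists 1.
have [del1 del1_gt0 near1] := nearP a (mem_head a s).
have [del2 del2_gt0 near2] := IH (fun b bs => nearP b (mem_behead (s := a :: s) bs)).
exists (Num.min del1 del2) => [|x' y']; first by rewrite lt_min del1_gt0.
rewrite !lt_min => /andP[xx'1 xx'2] /andP[yy'1 yy'2] b.
by rewrite inE => /predU1P[-> | bs]; [apply: near1 | apply: near2].
Qed.

Lemma near_pair_lt (f : X -> X) (c : R) x y :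
  d_continuous d f -> d (f x) (f y) < c ->
  near_pair (fun x' y' => d (f x') (f y') < c) x y.
Proof.
have [_ _ d_sym d_tri] := d_metric; move=> f_cont fxy_lt.
have gap_gt0 : 0 < (c - d (f x) (f y)) / 2 by rewrite divr_gt0 // subr_gt0.
have [delx delx_gt0 fx_near] := f_cont x _ gap_gt0.
have [dely dely_gt0 fy_near] := f_cont y _ gap_gt0.
exists (Num.min delx dely) => [|x' y']; first by rewrite lt_min delx_gt0.
rewrite !lt_min => /andP[/fx_near fxx' _] /andP[_ /fy_near fyy'].
have := d_tri (f x') (f x) (f y'); have := d_tri (f x) (f y) (f y').
by rewrite d_sym in fxx'; lra.
Qed.

Lemma d_open_ball y (e : R) : d_open d (fun z => d y z < e).
Proof.
have [_ _ _ d_tri] := d_metric; move=> z yz_lt.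
by exists (e - d y z) => [|z' zz']; [rewrite subr_gt0 | have := d_tri y z z'; lra].
Qed.

Lemma d_open_gt (f : X -> X) (c : R) y :
  d_continuous d f -> d_open d (fun z => c < d (f y) (f z)).
Proof.
have [_ _ d_sym d_tri] := d_metric; move=> f_cont z fyz_gt.
have gap_gt0 : 0 < d (f y) (f z) - c by rewrite subr_gt0.
have [del del_gt0 fz_near] := f_cont z _ gap_gt0.
exists del => // z' /fz_near fzz'.
by have := d_tri (f y) (f z') (f z); rewrite (d_sym (f z')); lra.
Qed.

End MetricNeighbourhoods.

Section ExpansiveAction.
Variables (R : realType) (X : Type) (d : X -> X -> R).
Variables (k : nat) (T : 'rV[int]_k -> X -> X) (c alpha : R).
Hypotheses (d_metric : is_metric d) (c_gt0 : 0 < c) (alpha_gt1 : 1 < alpha).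
Hypothesis expansive : forall x y, x <> y -> exists u, c < d (T u x) (T u y).
Implicit Types (x y z : X) (u v : 'rV[int]_k).

Local Notation nset := (nset d T c).
Local Notation rho := (rho d T c alpha).

Let d_refl z : d z z = 0.
Proof. by have [_ /(_ z z) [_ ->]] := d_metric. Qed.

Lemma rho_id x : rho x x = 0.
Proof. by rewrite /rho /nxy; case: pselect. Qed.

Lemma rho_neqE x y : x <> y -> exists m,
  [/\ rho x y = alpha ^- m, nset x y m & forall n, nset x y n -> (m <= n)%N].
Proof.
move=> xy; rewrite /rho /nxy; case: pselect => [//|?].
case: pselect => [ex_n | no_n] /=.
  case: ex_minnP => m /asboolP m_sep m_min.
  by exists m; split=> // n /asboolP /m_min.
have [u xy_sep] := expansive xy; have [n un] := normle_exists u.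
by case: no_n; exists n; apply/asboolP; exists u => //; apply: ltW.
Qed.

Lemma rho_ge0 x y : 0 <= rho x y.
Proof. by rewrite /rho; case: nxy => // n; rewrite ltW ?expN_gt0. Qed.

Lemma rho_le1 x y : rho x y <= 1.
Proof. by rewrite /rho; case: nxy => // n; rewrite expN_le1. Qed.

Lemma nset_sym x y n : nset x y n -> nset y x n.
Proof. by have [_ _ d_sym _] := d_metric; case=> u un xy_sep; exists u; rewrite // d_sym. Qed.

Lemma rho_sym x y : rho x y = rho y x.
Proof.
have [<- // | xy] := pselect (x = y).
have [m [-> m_sep m_min]] := rho_neqE xy.
have [m' [-> m'_sep m'_min]] := rho_neqE (nesym xy).
suff -> : m = m' by [].
by apply/eqP; rewrite eqn_leq (m_min _ (nset_sym m'_sep)) (m'_min _ (nset_sym m_sep)).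
Qed.

Lemma rho_eq0 x y : rho x y = 0 <-> x = y.
Proof.
split=> [|<-]; last exact: rho_id.
have [// | xy] := pselect (x = y).
by have [m [-> _ _]] := rho_neqE xy; move/eqP; rewrite gt_eqF ?expN_gt0.
Qed.

Lemma rho_ge_nset x y n : nset x y n -> alpha ^- n <= rho x y.
Proof.
move=> xy_sep; have [xy | xy] := pselect (x = y).
  by case: xy_sep => u _; rewrite xy d_refl leNgt c_gt0.
by have [m [-> _ m_min]] := rho_neqE xy; apply/ler_expN/m_min.
Qed.

Lemma rho_lt_expN_sep x y n :
  rho x y < alpha ^- n -> forall u, normle u n -> d (T u x) (T u y) < c.
Proof.
move=> rho_lt u un; rewrite ltNge; apply/negP => xy_sep.
by have := rho_ge_nset (ex_intro2 _ _ u un xy_sep); rewrite leNgt rho_lt.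
Qed.

Lemma rho_le_expN_sep x y n :
  (forall u, normle u n -> d (T u x) (T u y) < c) -> rho x y <= alpha ^- n.+1.
Proof.
move=> near_xy; have [<- | xy] := pselect (x = y); first by rewrite rho_id ltW ?expN_gt0.
have [m [-> [u um xy_sep] _]] := rho_neqE xy; apply: ler_expN => //.
rewrite ltnNge; apply/negP => mn.
by have := near_xy u (normle_mono mn um); rewrite ltNge xy_sep.
Qed.

Section QuasiUltrametric.
Variable l : nat.
Hypothesis T_action : is_action T.
Hypothesis half_sep : forall x y, c / 2 <= d x y ->
  exists2 u, normle u l & c <= d (T u x) (T u y).
Hypothesis alpha_l_lt2 : alpha ^+ l < 2.

Lemma nset_of_half_sep x y u m :
  normle u m -> c / 2 <= d (T u x) (T u y) -> nset x y (m + l).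
Proof.
have [_ T_add] := T_action; move=> um /half_sep [v vl xy_sep].
by exists (v + u); rewrite ?T_add // addnC normle_add.
Qed.

Lemma rho_le_2max x y z : rho x z <= 2 * Num.max (rho x y) (rho y z).
Proof.
have [_ _ _ d_tri] := d_metric.
have [<- | xz] := pselect (x = z).
  by rewrite rho_id mulr_ge0 // le_max rho_ge0.
have [m [-> [u um xz_sep] _]] := rho_neqE xz.
suff [xy_far | yz_far] : nset x y (m + l) \/ nset y z (m + l).
- apply: le_trans (ltW (expN_lt_double alpha_gt1 m alpha_l_lt2)) _.
  by rewrite ler_pM2l // le_max (rho_ge_nset xy_far).
- apply: le_trans (ltW (expN_lt_double alpha_gt1 m alpha_l_lt2)) _.
  by rewrite ler_pM2l // le_max (rho_ge_nset yz_far) orbT.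
have := d_tri (T u x) (T u y) (T u z).
have [xy_half | xy_close] := lerP (c / 2) (d (T u x) (T u y)) => tri.
  by left; apply: nset_of_half_sep xy_half.
by right; apply: (nset_of_half_sep um); lra.
Qed.

End QuasiUltrametric.

Section Semicontinuity.
Hypothesis T_continuous : forall u, d_continuous d (T u).

Lemma near_pair_sep x y n : (forall u, normle u n -> d (T u x) (T u y) < c) ->
  near_pair d (fun x' y' => forall u, normle u n -> d (T u x') (T u y') < c) x y.
Proof.
move=> xy_close; have [s s_ball] := normle_finite k n.
pose P u x' y' := d (T u x') (T u y') < c.
apply: near_pairW (near_pair_all (s := [seq u <- s | normle u n]) (P := P) _).
  by move=> x' y' close u un; apply: close; rewrite mem_filter un s_ball.
move=> u; rewrite mem_filter => /andP[un _].
exact/near_pair_lt/xy_close.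
Qed.

Lemma rho_usc x y b : rho x y < b -> near_pair d (fun x' y' => rho x' y' < b) x y.
Proof.
move=> rho_lt; have [b_gt1 | b_le1] := ltP 1 b.
  by exists 1 => // x' y' _ _; apply: le_lt_trans (rho_le1 _ _) b_gt1.
have [n rho_lt_n n1_lt_b] : exists2 n, rho x y < alpha ^- n & alpha ^- n.+1 < b.
  have [yx | xy] := pselect (x = y).
    subst y; have [n n_lt_b] := expN_small alpha_gt1 (le_lt_trans (rho_ge0 x x) rho_lt).
    exists n; first by rewrite rho_id expN_gt0.
    exact: le_lt_trans (ltW (ltr_expNS alpha_gt1 n)) n_lt_b.
  have [m [rho_m _ _]] := rho_neqE xy; rewrite rho_m in rho_lt *.
  case: m {rho_m} rho_lt => [|n] rho_lt.
    by move: rho_lt; rewrite expr0 invr1 ltNge b_le1.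
  by exists n; rewrite ?ltr_expNS.
apply: near_pairW (near_pair_sep (rho_lt_expN_sep rho_lt_n)) => x' y' sep.
exact: le_lt_trans (rho_le_expN_sep sep) n1_lt_b.
Qed.

Lemma rho_limn_sup (xs ys : nat -> X) x y : d_cvg d xs x -> d_cvg d ys y ->
  limn_sup (fun n => rho (xs n) (ys n)) <= rho x y.
Proof.
have [_ _ d_sym _] := d_metric; move=> xs_cvg ys_cvg.
apply/ler_addgt0Pr => e e_gt0.
have rho_lt : rho x y < rho x y + e by rewrite ltrDl.
have [del del_gt0 rho_near] := rho_usc rho_lt.
have [N1 xs_near] := xs_cvg _ del_gt0; have [N2 ys_near] := ys_cvg _ del_gt0.
apply: (@limn_sup_le_eventually _ _ 1 _ (maxn N1 N2)) => [n | n].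
  by rewrite ger0_norm ?rho_ge0 ?rho_le1.
rewrite geq_max => /andP[/xs_near xn /ys_near yn].
by apply/ltW/rho_near; rewrite d_sym.
Qed.

Lemma rho_ball_open x (e : R) : d_open d (fun y => rho x y < e).
Proof.
move=> y /rho_usc [del del_gt0 rho_near].
by exists del => // z yz; apply: rho_near; rewrite ?d_refl.
Qed.

Lemma rho_balls_base U : d_compact d -> d_open d U -> forall y, U y ->
  exists x, exists2 e : R, 0 < e & rho x y < e /\ (forall z, rho x z < e -> U z).
Proof.
move=> X_compact U_open y Uy; have [eps eps_gt0 ball_U] := U_open y Uy.
pose F (o : option 'rV[int]_k) z : Prop :=
  if o is Some u then c < d (T u y) (T u z) else d y z < eps.
have F_open o : d_open d (F o) by case: o => [u|]; [apply: d_open_gt | apply: d_open_ball].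
have F_cover z : exists o, F o z.
  have [<- | yz] := pselect (y = z); first by exists None; rewrite /F d_refl.
  by have [u yz_sep] := expansive yz; exists (Some u).
have [n [f f_cover]] := X_compact _ F F_open F_cover.
pose size_of (o : option 'rV[int]_k) :=
  if o is Some u then xchoose (normle_exists u) else 0%N.
pose N := (\max_(i < n) size_of (f i))%N.
exists y, (alpha ^- N); first exact: expN_gt0.
split=> [|z rho_lt]; first by rewrite rho_id expN_gt0.
have [i] := f_cover z; have := leq_bigmax (F := fun i => size_of (f i)) i.
case: (f i) => [u | _ /ball_U //] /= uN yz_sep.
have u_size := xchooseP (normle_exists u).
by have := rho_lt_expN_sep rho_lt (normle_mono uN u_size); rewrite ltNge ltW.
Qed.

End Semicontinuity.

End ExpansiveAction.

Unset Implicit Arguments.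

Theorem lemma4p3 (R : realType) (X : Type) (d : X -> X -> R)
  (k : nat) (T : 'rV[int]_k -> X -> X) (c : R) (l : nat) (alpha : R) :
  is_metric d -> d_compact d -> (0 < k)%N ->
  is_action T -> (forall u, d_continuous d (T u)) ->
  0 < c ->
  (forall x y, x <> y -> exists u, c < d (T u x) (T u y)) ->
  (0 < l)%N ->
  (forall x y, c / 2 <= d x y -> exists2 u, normle u l & c <= d (T u x) (T u y)) ->
  1 < alpha -> alpha ^+ l < 2 ->
  let r := rho d T c alpha in
  [/\ (forall x y, r x y = r y x),
      (forall x y, r x y = 0 <-> x = y),
      (forall x y z, r x z <= 2 * Num.max (r x y) (r y z)),
      (forall (xs ys : nat -> X) x y, d_cvg d xs x -> d_cvg d ys y ->
          limn_sup (fun n => r (xs n) (ys n)) <= r x y) &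
      ((forall x (e : R), 0 < e -> d_open d (fun y => r x y < e)) /\
       (forall U, d_open d U -> forall y, U y ->
          exists x, exists2 e : R, 0 < e &
            r x y < e /\ (forall z, r x z < e -> U z)))].
Proof.
move=> d_metric X_compact _ T_action T_cont c_gt0 expansive _ half_sep alpha_gt1 alpha_l_lt2 r.
split.
- exact: rho_sym.
- exact: rho_eq0.
- exact: rho_le_2max half_sep alpha_l_lt2.
- exact: rho_limn_sup.
- split=> [x e _ | U U_open]; first exact: rho_ball_open.
  exact: rho_balls_base.
Qed.
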